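(* Let $(\Omega,+)$ be a group and $(a,b)$ a pair of subgroups. Then: (1) the set $a^\top\cap{}^\top b=\{x: a\top x,\ x\top b\}$ is stable under $(x,y,z)\mapsto\Gamma(x,a,y,b,z)$, and with the induced law it is a torsor, denoted $U_{ab}$; (2) the set $b^\top\cap{}^\top a=\{x: b\top x,\ x\top a\}$ is stable under $(x,y,z)\mapsto\check\Gamma(x,a,y,b,z)$, and with the induced law it is a torsor, denoted $\check U_{ab}$; (3) $\check U_{ba}=U_{ab}^{opp}$, i.e. $\check U_{ba}$ (the set $a^\top\cap{}^\top b$ with law $\check\Gamma(x,b,y,a,z)$) coincides with the set $a^\top\cap{}^\top b$ with the opposite law $(x,y,z)\mapsto\Gamma(z,a,y,b,x)$.
   Context: $(\Omega,+)$ is a group written additively but not necessarily abelian. For subsets $x,y$, $x\top y$ means every $\omega$ has a unique decomposition $\omega=\xi+\eta$ with $\xi\in x,\eta\in y$. $\Gamma(x,a,y,b,z)=\{\omega:\exists\alpha\in a,\beta\in b:\ \alpha+\omega+\beta\in y,\ \alpha+\omega\in z,\ \omega+\beta\in x\}$; $\check\Gamma(x,a,y,b,z)=\{\omega:\exists\alpha\in a,\beta\in b:\ \beta+\omega+\alpha\in y,\ \omega+\alpha\in z,\ \beta+\omega\in x\}$. A torsor is a set with a ternary map $(xyz)$ satisfying $(xy(zuv))=(x(uzy)v)=((xyz)uv)$ and $(xxy)=y=(yxx)$. *)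

Set Implicit Arguments.

Record group := Group {
  carrier :> Type;
  gadd : carrier -> carrier -> carrier;
  gzero : carrier;
  gopp : carrier -> carrier;
  gaddA : forall x y z, gadd x (gadd y z) = gadd (gadd x y) z;
  gadd0l : forall x, gadd gzero x = x;
  gaddNl : forall x, gadd (gopp x) x = gzero
}.

Arguments gadd {g}. Arguments gzero {g}. Arguments gopp {g}.
Notation "x + y" := (gadd x y).

Definition subset (O : group) := O -> Prop.

Definition is_subgroup (O : group) (a : subset O) : Prop :=
  a gzero /\ (forall x y, a x -> a y -> a (x + y)) /\ (forall x, a x -> a (gopp x)).

Definition top (O : group) (x y : subset O) : Prop :=
  forall w : O, exists! p : O * O, x (fst p) /\ y (snd p) /\ w = fst p + snd p.

Definition Gamma (O : group) (x a y b z : subset O) : subset O :=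
  fun w => exists al be, a al /\ b be /\ y (al + w + be) /\ z (al + w) /\ x (w + be).

Definition Gamma_check (O : group) (x a y b z : subset O) : subset O :=
  fun w => exists al be, a al /\ b be /\ y (be + w + al) /\ z (w + al) /\ x (be + w).

Definition stable (T : Type) (S : T -> Prop) (m : T -> T -> T -> T) : Prop :=
  forall x y z, S x -> S y -> S z -> S (m x y z).

Definition torsor_on (T : Type) (S : T -> Prop) (m : T -> T -> T -> T) : Prop :=
  (forall x y z u v, S x -> S y -> S z -> S u -> S v ->
     m x y (m z u v) = m x (m u z y) v /\ m x (m u z y) v = m (m x y z) u v) /\
  (forall x y, S x -> S y -> m x x y = y /\ m y x x = y).

Definition Uset (O : group) (a b : subset O) : subset O -> Prop :=
  fun x => top a x /\ top x b.

(** The ⊤-conditions say that translates of the members of U_ab decompose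
    uniquely; stability comes from decomposing w along a ⊤ z, then z along
    y ⊤ b, then w - β along a ⊤ x, and uniqueness of the resulting
    decomposition follows by peeling off one ⊤-condition after the other.
    The torsor laws are relational: each of the three bracketings of a
    double Γ describes the same zigzag of translates (w+β₁ ∈ x, α₁+w+β₁ ∈ y,
    α₁+w+β₂ ∈ z, α₂+w+β₂ ∈ u, α₂+w ∈ v), so associativity needs no
    ⊤-hypothesis at all, while Γ(x,a,x,b,y) = y uses uniqueness in a ⊤ x.
    Finally Γ̌(x,a,y,b,z) = Γ(z,b,y,a,x), which yields (2) and (3) from (1). *)

From Stdlib Require Import FunctionalExtensionality PropExtensionality.

Section GroupLemmas.
Variable O : group.
Implicit Types x y z : O.

Lemma gaddNr x : x + gopp x = gzero.
Proof.
  rewrite <- (gadd0l _ (x + gopp x)), <- (gaddNl _ (gopp x)) at 1.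
  rewrite <- gaddA, (gaddA _ (gopp x) x (gopp x)), gaddNl, gadd0l, gaddNl.
  reflexivity.
Qed.

Lemma gaddr0 x : x + gzero = x.
Proof. rewrite <- (gaddNl _ x), gaddA, gaddNr, gadd0l. reflexivity. Qed.

Lemma gaddK x y : x + y + gopp y = x.
Proof. rewrite <- gaddA, gaddNr, gaddr0. reflexivity. Qed.

Lemma gaddNK x y : x + gopp y + y = x.
Proof. rewrite <- gaddA, gaddNl, gaddr0. reflexivity. Qed.

Lemma gaddrI x y z : x + y = x + z -> y = z.
Proof.
  intro E.
  rewrite <- (gadd0l _ y), <- (gadd0l _ z), <- (gaddNl _ x), <- !gaddA, E.
  reflexivity.
Qed.

Lemma gaddIr x y z : y + x = z + x -> y = z.
Proof. intro E. rewrite <- (gaddK y x), <- (gaddK z x), E. reflexivity. Qed.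

Lemma goppK x : gopp (gopp x) = x.
Proof. apply (gaddrI (gopp x)). rewrite gaddNr, gaddNl. reflexivity. Qed.

Lemma goppD x y : gopp (x + y) = gopp y + gopp x.
Proof. apply (gaddrI (x + y)). rewrite gaddNr, gaddA, gaddK, gaddNr. reflexivity. Qed.

Lemma gopp0 : gopp (@gzero O) = gzero.
Proof. rewrite <- (gadd0l _ (gopp gzero)), gaddNr. reflexivity. Qed.

Lemma gopp_inj x y : gopp x = gopp y -> x = y.
Proof. intro E. rewrite <- (goppK x), E, goppK. reflexivity. Qed.

Lemma subgroup0 (c : subset O) : is_subgroup c -> c gzero.
Proof. intros [H _]; exact H. Qed.

Lemma subgroupD (c : subset O) : is_subgroup c -> forall x y, c x -> c y -> c (x + y).
Proof. intros [_ [H _]]; exact H. Qed.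

Lemma subgroupN (c : subset O) : is_subgroup c -> forall x, c x -> c (gopp x).
Proof. intros [_ [_ H]]; exact H. Qed.

Lemma top_exists (p q : subset O) :
  top p q -> forall w, exists s t, p s /\ q t /\ w = s + t.
Proof. intros T w. destruct (T w) as [[s t] [[Hs [Ht E]] _]]. exists s, t; auto. Qed.

Lemma top_unique (p q : subset O) : top p q -> forall s t s' t',
  p s -> q t -> p s' -> q t' -> s + t = s' + t' -> s = s' /\ t = t'.
Proof.
  intros T s t s' t' Hs Ht Hs' Ht' E.
  destruct (T (s + t)) as [st [_ U]].
  assert (E1 := U (s, t) (conj Hs (conj Ht eq_refl))).
  assert (E2 := U (s', t') (conj Hs' (conj Ht' E))).
  rewrite E1 in E2. injection E2. auto.
Qed.

Lemma subset_ext (p q : subset O) : (forall w, p w <-> q w) -> p = q.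
Proof.
  intro H. apply functional_extensionality; intro w.
  apply propositional_extensionality, H.
Qed.

End GroupLemmas.

Arguments top_exists {O p q}. Arguments top_unique {O p q}.
Arguments gaddrI {O x y z}. Arguments gaddIr {O x y z}.
Arguments subgroup0 {O c}. Arguments subgroupD {O c}. Arguments subgroupN {O c}.

Ltac gsimpl := do 4 (rewrite ?goppD, ?goppK, ?gopp0, ?gaddA, ?gaddK, ?gaddNK,
  ?gaddNl, ?gaddNr, ?gadd0l, ?gaddr0).
Ltac gsimpl_in H := do 4 (rewrite ?goppD, ?goppK, ?gopp0, ?gaddA, ?gaddK, ?gaddNK,
  ?gaddNl, ?gaddNr, ?gadd0l, ?gaddr0 in H).

Section GammaTorsor.
Variable O : group.
Variables a b : subset O.
Hypothesis Ha : is_subgroup a.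
Hypothesis Hb : is_subgroup b.
Implicit Types x y z u v : subset O.

Ltac subgroup := repeat match goal with
  | |- a (_ + _) => apply (subgroupD Ha) | |- a (gopp _) => apply (subgroupN Ha)
  | |- a gzero => apply (subgroup0 Ha)
  | |- b (_ + _) => apply (subgroupD Hb) | |- b (gopp _) => apply (subgroupN Hb)
  | |- b gzero => apply (subgroup0 Hb) end.

Lemma Gamma_decomp_unique_l x y z : top a x -> top y b -> top a z ->
  forall p q p' q', a p -> Gamma x a y b z q -> a p' -> Gamma x a y b z q' ->
  p + q = p' + q' -> p = p' /\ q = q'.
Proof.
  intros ax yb az p q p' q' Hp [al [be [Hal [Hbe [Hy [Hz Hx]]]]]]
    Hp' [al' [be' [Hal' [Hbe' [Hy' [Hz' Hx']]]]]] E.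
  destruct (top_unique az (p + gopp al) (al + q) (p' + gopp al') (al' + q'))
    as [_ Ez]; subgroup; auto.
  { gsimpl. exact E. }
  destruct (top_unique yb (al + q + be) (gopp be) (al' + q' + be') (gopp be'))
    as [_ Eb]; subgroup; auto.
  { gsimpl. exact Ez. }
  apply gopp_inj in Eb. subst be'.
  destruct (top_unique ax p (q + be) p' (q' + be)) as [Ep Eq]; auto.
  { rewrite !gaddA, E. reflexivity. }
  split; [exact Ep | exact (gaddIr Eq)].
Qed.

Arguments Gamma_decomp_unique_l {x y z} _ _ _ {p q p' q'}.

Lemma Gamma_decomp_unique_r x y z : top x b -> top a y -> top z b ->
  forall p q p' q', b p -> Gamma x a y b z q -> b p' -> Gamma x a y b z q' ->
  q + p = q' + p' -> p = p' /\ q = q'.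
Proof.
  intros xb ay zb p q p' q' Hp [al [be [Hal [Hbe [Hy [Hz Hx]]]]]]
    Hp' [al' [be' [Hal' [Hbe' [Hy' [Hz' Hx']]]]]] E.
  destruct (top_unique xb (q + be) (gopp be + p) (q' + be') (gopp be' + p'))
    as [Ex _]; subgroup; auto.
  { gsimpl. exact E. }
  destruct (top_unique ay (gopp al) (al + q + be) (gopp al') (al' + q' + be'))
    as [Ea _]; subgroup; auto.
  { gsimpl. exact Ex. }
  apply gopp_inj in Ea. subst al'.
  destruct (top_unique zb (al + q) p (al + q') p') as [Eq Ep]; auto.
  { rewrite <- !gaddA, E. reflexivity. }
  split; [exact Ep | exact (gaddrI Eq)].
Qed.

Arguments Gamma_decomp_unique_r {x y z} _ _ _ {p q p' q'}.

Lemma top_Gamma_l x y z : top a x -> top y b -> top a z -> top a (Gamma x a y b z).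
Proof.
  intros ax yb az w.
  destruct (top_exists az w) as [a0 [z0 [Ha0 [Hz0 Ew]]]].
  destruct (top_exists yb z0) as [y0 [b0 [Hy0 [Hb0 Ez0]]]].
  destruct (top_exists ax (w + gopp b0)) as [a1 [x1 [Ha1 [Hx1 Ew1]]]].
  assert (G : Gamma x a y b z (gopp a1 + w)).
  { exists (gopp a0 + a1), (gopp b0). split; [subgroup; auto|].
    split; [subgroup; auto|]. split; [|split].
    - rewrite Ew, Ez0. gsimpl. exact Hy0.
    - rewrite Ew. gsimpl. exact Hz0.
    - replace (gopp a1 + w + gopp b0) with x1; [exact Hx1|].
      rewrite <- gaddA, Ew1. gsimpl. reflexivity. }
  exists (a1, gopp a1 + w). split.
  - simpl. split; [exact Ha1|split; [exact G|]]. gsimpl. reflexivity.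
  - intros [p q] [Hp [Hq Ew']]. simpl in *.
    destruct (Gamma_decomp_unique_l ax yb az Ha1 G Hp Hq) as [-> ->];
      [|reflexivity].
    gsimpl. exact Ew'.
Qed.

Lemma top_Gamma_r x y z : top x b -> top a y -> top z b -> top (Gamma x a y b z) b.
Proof.
  intros xb ay zb w.
  destruct (top_exists xb w) as [x0 [b0 [Hx0 [Hb0 Ew]]]].
  destruct (top_exists ay x0) as [a0 [y0 [Ha0 [Hy0 Ex0]]]].
  destruct (top_exists zb (gopp a0 + w)) as [z1 [b1 [Hz1 [Hb1 Ew1]]]].
  assert (G : Gamma x a y b z (w + gopp b1)).
  { exists (gopp a0), (b1 + gopp b0). split; [subgroup; auto|].
    split; [subgroup; auto|]. split; [|split].
    - gsimpl. rewrite Ew, Ex0. gsimpl. exact Hy0.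
    - rewrite gaddA, Ew1. gsimpl. exact Hz1.
    - gsimpl. rewrite Ew. gsimpl. exact Hx0. }
  exists (w + gopp b1, b1). split.
  - simpl. split; [exact G|split; [exact Hb1|]]. gsimpl. reflexivity.
  - intros [q p] [Hq [Hp Ew']]. simpl in *.
    destruct (Gamma_decomp_unique_r xb ay zb Hb1 G Hp Hq) as [-> ->];
      [|reflexivity].
    gsimpl. exact Ew'.
Qed.

Lemma stable_Gamma : stable (Uset a b) (fun x y z => Gamma x a y b z).
Proof.
  intros x y z [ax xb] [ay yb] [az zb].
  split; [apply top_Gamma_l | apply top_Gamma_r]; assumption.
Qed.

Lemma Gamma_xxy x y : top a x -> top x b -> Gamma x a x b y = y.
Proof.
  intros ax xb. apply subset_ext; intro w; split.
  - intros [al [be [Hal [Hbe [Hx [Hy Hx']]]]]].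
    destruct (top_unique ax (gopp al) (al + w + be) gzero (w + be)) as [E _];
      subgroup; auto.
    { gsimpl. reflexivity. }
    replace al with (@gzero O) in Hy; [rewrite gadd0l in Hy; exact Hy|].
    apply gopp_inj. rewrite E. apply gopp0.
  - intro Hw. destruct (top_exists xb w) as [s [t [Hs [Ht E]]]].
    exists gzero, (gopp t). split; [subgroup|]. split; [subgroup; auto|].
    rewrite gadd0l. replace (w + gopp t) with s by (rewrite E; gsimpl; reflexivity).
    rewrite E in Hw |- *. gsimpl. auto.
Qed.

Lemma Gamma_yxx x y : top a x -> top x b -> Gamma y a x b x = y.
Proof.
  intros ax xb. apply subset_ext; intro w; split.
  - intros [al [be [Hal [Hbe [Hx [Hx' Hy]]]]]].
    destruct (top_unique xb (al + w + be) gzero (al + w) be) as [_ E];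
      subgroup; auto.
    { gsimpl. reflexivity. }
    subst be. rewrite gaddr0 in Hy. exact Hy.
  - intro Hw. destruct (top_exists ax w) as [s [t [Hs [Ht E]]]].
    exists (gopp s), gzero. split; [subgroup; auto|]. split; [subgroup|].
    rewrite !gaddr0. replace (gopp s + w) with t by (rewrite E; gsimpl; reflexivity).
    auto.
Qed.

Definition Gamma_zigzag x y z u v : subset O := fun w =>
  exists b1 a1 b2 a2, b b1 /\ a a1 /\ b b2 /\ a a2 /\
    x (w + b1) /\ y (a1 + w + b1) /\ z (a1 + w + b2) /\ u (a2 + w + b2) /\ v (a2 + w).

Lemma Gamma_zigzag_r x y z u v :
  Gamma x a y b (Gamma z a u b v) = Gamma_zigzag x y z u v.
Proof.
  apply subset_ext; intro w; split.
  - intros [al [be [Hal [Hbe [Hy [[al' [be' [Hal' [Hbe' [Hu [Hv Hz]]]]]] Hx]]]]]].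
    exists be, al, be', (al' + al). gsimpl_in Hu. gsimpl_in Hv. gsimpl_in Hz.
    repeat split; subgroup; gsimpl; auto.
  - intros [b1 [a1 [b2 [a2 [Hb1 [Ha1 [Hb2 [Ha2 [Hx [Hy [Hz [Hu Hv]]]]]]]]]]]].
    exists a1, b1. repeat split; subgroup; auto.
    exists (a2 + gopp a1), b2. repeat split; subgroup; gsimpl; auto.
Qed.

Lemma Gamma_zigzag_l x y z u v :
  Gamma (Gamma x a y b z) a u b v = Gamma_zigzag x y z u v.
Proof.
  apply subset_ext; intro w; split.
  - intros [al [be [Hal [Hbe [Hu [Hv [al' [be' [Hal' [Hbe' [Hy [Hz Hx]]]]]]]]]]]].
    exists (be + be'), al', be, al. gsimpl_in Hy. gsimpl_in Hz. gsimpl_in Hx.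
    repeat split; subgroup; gsimpl; auto.
  - intros [b1 [a1 [b2 [a2 [Hb1 [Ha1 [Hb2 [Ha2 [Hx [Hy [Hz [Hu Hv]]]]]]]]]]]].
    exists a2, b2. repeat split; subgroup; auto.
    exists a1, (gopp b2 + b1). repeat split; subgroup; gsimpl; auto.
Qed.

Lemma Gamma_zigzag_m x y z u v :
  Gamma x a (Gamma u a z b y) b v = Gamma_zigzag x y z u v.
Proof.
  apply subset_ext; intro w; split.
  - intros [al [be [Hal [Hbe [[al' [be' [Hal' [Hbe' [Hz [Hu Hy]]]]]] [Hv Hx]]]]]].
    exists be, (al' + al), (be + be'), al. gsimpl_in Hz. gsimpl_in Hu. gsimpl_in Hy.
    repeat split; subgroup; gsimpl; auto.
  - intros [b1 [a1 [b2 [a2 [Hb1 [Ha1 [Hb2 [Ha2 [Hx [Hy [Hz [Hu Hv]]]]]]]]]]]].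
    exists a2, b1. repeat split; subgroup; auto.
    exists (a1 + gopp a2), (gopp b1 + b2). repeat split; subgroup; gsimpl; auto.
Qed.

Lemma torsor_Gamma : torsor_on (Uset a b) (fun x y z => Gamma x a y b z).
Proof.
  split.
  - intros x y z u v _ _ _ _ _.
    rewrite Gamma_zigzag_r, Gamma_zigzag_m, Gamma_zigzag_l. split; reflexivity.
  - intros x y [ax xb] _. split; [apply Gamma_xxy | apply Gamma_yxx]; assumption.
Qed.

End GammaTorsor.

Lemma stable_opp (T : Type) (S : T -> Prop) (m : T -> T -> T -> T) :
  stable S m -> stable S (fun x y z => m z y x).
Proof. intros H x y z Sx Sy Sz. exact (H z y x Sz Sy Sx). Qed.

Lemma torsor_on_opp (T : Type) (S : T -> Prop) (m : T -> T -> T -> T) :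
  torsor_on S m -> torsor_on S (fun x y z => m z y x).
Proof.
  intros [A I]. split.
  - intros x y z u v Sx Sy Sz Su Sv.
    destruct (A v u z y x Sv Su Sz Sy Sx) as [E1 E2]. split; congruence.
  - intros x y Sx Sy. destruct (I x y Sx Sy). split; assumption.
Qed.

Lemma Gamma_checkE (O : group) (x a y b z : subset O) :
  Gamma_check x a y b z = Gamma z b y a x.
Proof.
  apply subset_ext; intro w; split;
    intros [al [be H]]; exists be, al; tauto.
Qed.

Theorem theorem7p3 (O : group) (a b : subset O) :
  is_subgroup a -> is_subgroup b ->
  (* (1) U_ab *)
  (stable (Uset a b) (fun x y z => Gamma x a y b z) /\
   torsor_on (Uset a b) (fun x y z => Gamma x a y b z)) /\
  (* (2) check U_ab on b^⊤ ∩ ^⊤a *)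
  (stable (Uset b a) (fun x y z => Gamma_check x a y b z) /\
   torsor_on (Uset b a) (fun x y z => Gamma_check x a y b z)) /\
  (* (3) check U_ba = U_ab^opp *)
  (forall x y z, Uset a b x -> Uset a b y -> Uset a b z ->
     Gamma_check x b y a z = Gamma z a y b x).
Proof.
  intros Ha Hb.
  assert (Ucheck : (fun x y z => Gamma_check x a y b z)
                   = (fun x y z => Gamma z b y a x)).
  { do 3 (apply functional_extensionality; intro). apply Gamma_checkE. }
  split; [|split].
  - split; [apply stable_Gamma | apply torsor_Gamma]; assumption.
  - rewrite Ucheck.
    split; [apply stable_opp, stable_Gamma | apply torsor_on_opp, torsor_Gamma];
      assumption.
  - intros x y z _ _ _. apply Gamma_checkE.
Qed.
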